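(* For every nonzero integer $r$ and every integer $n\ge 0$, \[ \sum_{j=0}^{n}(-1)^{rj}L_{r(n-2j)}=\sum_{j=0}^{n}\left(\frac{L_r}{2}\right)^jL_{r(n-j)}=\frac{2F_{r(n+1)}}{F_r}. \]
   Context: $F_n$ and $L_n$ denote the Fibonacci and Lucas numbers, defined for all integers $n$ by $F_0=0,F_1=1$, $L_0=2,L_1=1$ and $x_n=x_{n-1}+x_{n-2}$; equivalently $F_n=(\alpha^n-\beta^n)/(\alpha-\beta)$, $L_n=\alpha^n+\beta^n$ with $\alpha=(1+\sqrt5)/2$, $\beta=(1-\sqrt5)/2$. In particular $F_{-n}=(-1)^{n-1}F_n$ and $L_{-n}=(-1)^nL_n$. *)

From mathcomp Require Import all_boot all_order all_algebra.
Set Implicit Arguments. Unset Strict Implicit. Unset Printing Implicit Defensive.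
Import Order.TTheory GRing.Theory Num.Theory.
Local Open Scope ring_scope.

Fixpoint fib_pair (n : nat) : int * int :=
  match n with
  | 0%N => (0, 1)
  | n'.+1 => let p := fib_pair n' in (p.2, p.1 + p.2)
  end.
Definition fibn (n : nat) : int := (fib_pair n).1.
Definition lucn (n : nat) : int := (if n is 0%N then 2 else fibn n.-1 + fibn n.+1).

(* Extension to all integer indices: F_{-n} = (-1)^(n-1) F_n, L_{-n} = (-1)^n L_n.
   Negz n denotes -(n+1). *)
Definition fibz (z : int) : int :=
  match z with
  | Posz n => fibn n
  | Negz n => (-1) ^+ n * fibn n.+1
  end.
Definition lucz (z : int) : int :=
  match z with
  | Posz n => lucn n
  | Negz n => (-1) ^+ n.+1 * lucn n.+1
  end.

From mathcomp Require Import all_boot all_order all_algebra algC.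
From mathcomp Require Import ring.
Import Order.TTheory GRing.Theory Num.Theory.
Local Open Scope ring_scope.

Set Implicit Arguments.
Unset Strict Implicit.

(* Binet: if al + be = 1 and al * be = -1 then L_k = al^k + be^k and
   F_k (al - be) = al^k - be^k for every integer k.  With A = al^r and B = be^r
   this gives L_(rk) = A^k + B^k, (-1)^r = A B and F_r (al - be) = A - B, so all
   three expressions equal 2 h_n with h_n = sum_j A^(n-j) B^j, which is
   (A^(n+1) - B^(n+1)) / (A - B).  For the alternating sum, the j-th term is
   A^(n-j) B^j + A^j B^(n-j); for the second sum, multiplying by A - B turns it
   into 2 (A^(n+1) - B^(n+1)) by induction on n.  The computation is done in
   algC with al, be = (1 +- sqrt 5) / 2 and pulled back to rat along the
   injective morphism ratr. *)

Lemma exprz_Negz (R : unitRingType) (x : R) n : x ^ Negz n = (x^-1) ^+ n.+1.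
Proof. by rewrite exprVn. Qed.

Section Binet.
Variables (C : fieldType) (al be : C).
Hypotheses (al_add_be : al + be = 1) (al_mul_be : al * be = -1) (al_neq_be : al != be).

Lemma al_sqr : al ^+ 2 = al + 1.
Proof.
transitivity (al * (al + be) - al * be); first ring.
by rewrite al_add_be al_mul_be mulr1 opprK.
Qed.

Lemma be_sqr : be ^+ 2 = be + 1.
Proof.
transitivity (be * (al + be) - al * be); first ring.
by rewrite al_add_be al_mul_be mulr1 opprK.
Qed.

Lemma fib_pair_binet n :
  (fib_pair n).1%:~R * (al - be) = al ^+ n - be ^+ n /\
  (fib_pair n).2%:~R * (al - be) = al ^+ n.+1 - be ^+ n.+1.
Proof.
elim: n => [|n [IH1 IH2]] /=; first by rewrite mul0r subrr mul1r !expr1.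
split => //; rewrite intrD mulrDl IH1 IH2.
have expr_SS x : x ^+ n.+2 = x ^+ n * x ^+ 2 by rewrite -exprD addn2.
rewrite !expr_SS al_sqr be_sqr exprSr [be ^+ n.+1]exprSr; ring.
Qed.

Lemma fibn_binet n : (fibn n)%:~R * (al - be) = al ^+ n - be ^+ n.
Proof. by case: (fib_pair_binet n). Qed.

Lemma lucn_binet n : (lucn n)%:~R = al ^+ n + be ^+ n.
Proof.
case: n => [|n] /=; first by rewrite !expr0.
apply: (mulIf (_ : al - be != 0)); first by rewrite subr_eq0.
rewrite intrD mulrDl !fibn_binet.
transitivity ((al ^+ n - be ^+ n) * (1 + al * be) + (al ^+ n.+1 + be ^+ n.+1) * (al - be)).
  rewrite !exprS; ring.
by rewrite al_mul_be subrr mulr0 add0r.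
Qed.

Lemma al_be_neq0 : (al != 0) && (be != 0).
Proof. by rewrite -negb_or -mulf_eq0 al_mul_be oppr_eq0 oner_eq0. Qed.

Lemma invr_al : al^-1 = - be.
Proof. by apply: mulr1_eq; rewrite mulrN al_mul_be opprK. Qed.

Lemma invr_be : be^-1 = - al.
Proof. by apply: mulr1_eq; rewrite mulrN mulrC al_mul_be opprK. Qed.

Lemma lucz_binet z : (lucz z)%:~R = al ^ z + be ^ z.
Proof.
case: z => n; first exact: lucn_binet.
rewrite -[lucz _]/((-1) ^+ n.+1 * lucn n.+1) !exprz_Negz invr_al invr_be.
by rewrite (exprNn al) (exprNn be) intrM rmorph_sign lucn_binet mulrDr addrC.
Qed.

Lemma fibz_binet z : (fibz z)%:~R * (al - be) = al ^ z - be ^ z.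
Proof.
case: z => n; first exact: fibn_binet.
rewrite -[fibz _]/((-1) ^+ n * fibn n.+1) !exprz_Negz invr_al invr_be.
rewrite (exprNn al) (exprNn be) intrM rmorph_sign -mulrA fibn_binet !exprS; ring.
Qed.
End Binet.

Lemma fib_pair_pos n : 0 <= (fib_pair n).1 /\ 0 < (fib_pair n).2.
Proof.
elim: n => [|n [IH1 IH2]] //=.
by split; [exact: ltW | exact: ltr_wpDl].
Qed.

Lemma fibn_gt0 n : 0 < fibn n.+1.
Proof. by case: (fib_pair_pos n). Qed.

Lemma fibz_neq0 z : z != 0 -> fibz z != 0.
Proof.
case: z => [[|n]|n] // _; first by rewrite gt_eqF ?fibn_gt0.
by rewrite /= mulf_neq0 ?signr_eq0 ?gt_eqF ?fibn_gt0.
Qed.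

Lemma expfz_sub_twice (F : fieldType) (x : F) (n j : nat) : x != 0 -> (j <= n)%N ->
  x ^ (n%:Z - 2 * j%:Z) * x ^+ j = x ^+ (n - j).
Proof.
move=> x0 le_jn; rewrite -[x ^+ j]/(x ^ j%:Z) -expfzDr //.
rewrite -[x ^+ (n - j)]/(x ^ (n - j)%N%:Z) -subzn //.
by congr (x ^ _); ring.
Qed.

Section PowerSums.
Variables (F : fieldType) (A B : F).

Lemma subrX_sum n :
  A ^+ n.+1 - B ^+ n.+1 = (A - B) * \sum_(0 <= j < n.+1) A ^+ (n - j) * B ^+ j.
Proof. by rewrite subrXX big_mkord. Qed.

Lemma sum_expr_rev n :
  \sum_(0 <= j < n.+1) A ^+ j * B ^+ (n - j) = \sum_(0 <= j < n.+1) A ^+ (n - j) * B ^+ j.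
Proof.
rewrite big_nat_rev /=; apply: eq_big_nat => j /andP[_ lt_jn].
by rewrite add0n subSS subKn.
Qed.

Lemma mean_power_sum n : (2 : F) != 0 ->
  (A - B) * \sum_(0 <= j < n.+1) ((A + B) / 2) ^+ j * (A ^+ (n - j) + B ^+ (n - j))
    = 2 * (A ^+ n.+1 - B ^+ n.+1).
Proof.
move=> two_neq0; elim: n => [|n IH].
  by rewrite big_nat1 subnn !expr0 mul1r !expr1; field.
rewrite big_nat_recl // expr0 mul1r subn0.
under eq_big_nat => j _ do rewrite subSS exprS -mulrA.
by rewrite -big_distrr /= mulrDr mulrCA IH !exprS; field.
Qed.
End PowerSums.

Section LucasSums.
Variables (C : numFieldType) (al be : C).
Hypotheses (al_add_be : al + be = 1) (al_mul_be : al * be = -1) (al_neq_be : al != be).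
Variables (r : int) (n : nat).

Let A := al ^ r.
Let B := be ^ r.
Let S := \sum_(0 <= j < n.+1) A ^+ (n - j) * B ^+ j.

Let al_neq0 : al != 0. Proof. by case/andP: (al_be_neq0 al_mul_be). Qed.
Let be_neq0 : be != 0. Proof. by case/andP: (al_be_neq0 al_mul_be). Qed.

Lemma lucz_mulr k : (lucz (r * k))%:~R = A ^ k + B ^ k.
Proof. by rewrite (lucz_binet al_add_be al_mul_be al_neq_be) !exprz_exp. Qed.

Lemma fibz_mulr k : (fibz (r * k))%:~R * (al - be) = A ^ k - B ^ k.
Proof. by rewrite (fibz_binet al_add_be al_mul_be) !exprz_exp. Qed.

Lemma alt_lucas_term j : (j <= n)%N ->
  (-1 : C) ^ (r * j%:Z) * (lucz (r * (n%:Z - 2 * j%:Z)))%:~R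
    = A ^+ (n - j) * B ^+ j + A ^+ j * B ^+ (n - j).
Proof.
move=> le_jn; rewrite -al_mul_be -exprz_exp exprzMl ?unitfE // lucz_mulr -/A -/B.
rewrite -[(A * B) ^ j%:Z]/((A * B) ^+ j) exprMn mulrDr.
rewrite -(expfz_sub_twice (expfz_neq0 _ al_neq0) le_jn).
rewrite -(expfz_sub_twice (expfz_neq0 _ be_neq0) le_jn).
ring.
Qed.

Lemma ratr_alt_lucas_sum :
  ratr (\sum_(0 <= j < n.+1) (-1 : rat) ^ (r * j%:Z) * (lucz (r * (n%:Z - 2 * j%:Z)))%:~R)
    = 2 * S.
Proof.
rewrite rmorph_sum.
under eq_big_nat => j /andP[_ le_jn].
  by rewrite rmorphM rmorphXz ?unitrN1 // rmorphN1 rmorph_int (alt_lucas_term le_jn); over.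
by rewrite big_split /= sum_expr_rev -/S mulr_natl mulr2n.
Qed.

Hypothesis r_neq0 : r != 0.

Let al_sub_be_neq0 : al - be != 0. Proof. by rewrite subr_eq0. Qed.

Let fibz_r : (fibz r)%:~R * (al - be) = A - B.
Proof. by have := fibz_mulr 1; rewrite mulr1 !expr1z. Qed.

Let A_sub_B_neq0 : A - B != 0.
Proof. by rewrite -fibz_r mulf_neq0 ?intr_eq0 ?fibz_neq0. Qed.

Lemma ratr_mean_lucas_sum :
  ratr (\sum_(0 <= j < n.+1) ((lucz r)%:~R / 2) ^+ j * (lucz (r * (n%:Z - j%:Z)))%:~R)
    = 2 * S.
Proof.
have lucz_r : (lucz r)%:~R = A + B by have := lucz_mulr 1; rewrite mulr1 !expr1z.
rewrite rmorph_sum.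
under eq_big_nat => j /andP[_ le_jn].
  rewrite rmorphM rmorphXn fmorph_div rmorph_nat !rmorph_int lucz_r lucz_mulr subzn //.
  over.
apply: (mulfI A_sub_B_neq0).
by rewrite mean_power_sum ?pnatr_eq0 // subrX_sum -/S mulrCA.
Qed.

Lemma ratr_fib_ratio :
  ratr (2 * (fibz (r * (n%:Z + 1)))%:~R / (fibz r)%:~R) = 2 * S.
Proof.
rewrite fmorph_div rmorphM rmorph_nat !rmorph_int -PoszD addn1.
transitivity (2 * ((fibz (r * n.+1))%:~R * (al - be)) / ((fibz r)%:~R * (al - be))).
  by field; rewrite al_sub_be_neq0 intr_eq0 fibz_neq0.
by rewrite fibz_r (fibz_mulr n.+1) subrX_sum -/S; field.
Qed.
End LucasSums.

Lemma golden_roots : exists al be : algC, [/\ al + be = 1, al * be = -1 & al != be].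
Proof.
pose s : algC := sqrtC 5.
have s_neq0 : s != 0 by rewrite sqrtC_eq0 pnatr_eq0.
exists ((1 + s) / 2), ((1 - s) / 2); split.
- by field.
- transitivity ((1 - s ^+ 2) / 4); first by field.
  by rewrite sqrtCK; field.
- by rewrite -subr_eq0 (_ : _ - _ = s) //; field.
Qed.

Theorem theorem1 (r : int) (n : nat) : r != 0 ->
  (\sum_(0 <= j < n.+1) (-1 : rat) ^ (r * j%:Z) * (lucz (r * (n%:Z - 2 * j%:Z)))%:~R
    = \sum_(0 <= j < n.+1) ((lucz r)%:~R / 2) ^+ j * (lucz (r * (n%:Z - j%:Z)))%:~R)
  /\
  (\sum_(0 <= j < n.+1) ((lucz r)%:~R / 2) ^+ j * (lucz (r * (n%:Z - j%:Z)))%:~R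
    = 2 * (fibz (r * (n%:Z + 1)))%:~R / (fibz r)%:~R :> rat).
Proof.
move=> r_neq0; have [al [be [al_add_be al_mul_be al_neq_be]]] := golden_roots.
have ratr_inj : injective (@ratr algC) by exact: fmorph_inj.
have alt := ratr_alt_lucas_sum al_add_be al_mul_be al_neq_be r n.
have mean := ratr_mean_lucas_sum al_add_be al_mul_be al_neq_be n r_neq0.
have ratio := ratr_fib_ratio al_add_be al_mul_be al_neq_be n r_neq0.
by split; apply: ratr_inj; rewrite ?alt mean ?ratio.
Qed.
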